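(* Let $\{g_\xi\}_{\xi\in K}$ be a family of real-valued continuous functions on the unit circle $\mathbb{T}$, and for bounded non-negative measures $d\mu_0,d\mu_1$ on $\mathbb{T}$ define $\delta(d\mu_0,d\mu_1)=\sup_{\xi\in K}\left|\int_{\mathbb{T}}g_\xi\,(d\mu_0-d\mu_1)\right|$. Then $\delta$ is a weakly continuous metric on the set $\mathfrak{M}$ of bounded non-negative measures on $\mathbb{T}$ if and only if the following two conditions hold: (a) for any two distinct measures $d\mu_0\neq d\mu_1$ in $\mathfrak{M}$ there is $\xi\in K$ with $\int_{\mathbb{T}}g_\xi d\mu_0\neq\int_{\mathbb{T}}g_\xi d\mu_1$; and (b) the family $\{g_\xi\}_{\xi\in K}$ is equicontinuous and uniformly bounded.
   Context: Weak topology on $\mathfrak{M}$: $d\mu_k\to d\mu$ iff $\int fd\mu_k\to\int fd\mu$ for every real continuous $f$ on $\mathbb{T}$; a metric $\delta$ on $\mathfrak{M}$ is weakly continuous if it is continuous on $\mathfrak{M}\times\mathfrak{M}$ for this topology. The family is equicontinuous if for every $\epsilon>0$ there is $\gamma>0$ such that $|g_\xi(\theta_1)-g_\xi(\theta_2)|<\epsilon$ whenever $|\theta_1-\theta_2|<\gamma$, for all $\theta_1,\theta_2\in\mathbb{T}$ and all $\xi\in K$. *)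

(* The unit circle T is modelled as R / 2piZ:
   functions on T are 2pi-periodic functions R -> R, and bounded non-negative
   (Borel) measures on T are finite measures on R concentrated on [0, 2pi). *)
From HB Require Import structures.
From mathcomp Require Import all_boot all_order all_algebra.
From mathcomp Require Import all_classical all_reals all_analysis.
Set Implicit Arguments. Unset Strict Implicit. Unset Printing Implicit Defensive.
Import Order.TTheory GRing.Theory Num.Theory.
Import numFieldNormedType.Exports.
Local Open Scope classical_set_scope.
Local Open Scope ring_scope.

Definition periodic2pi (R : realType) (f : R -> R) : Prop :=
  forall x : R, f (x + 2 * pi) = f x.

Definition on_circle (R : realType) (mu : {finite_measure set R -> \bar R}) : Prop :=
  mu (~` `[0, 2 * pi[%classic) = 0%E.

Definition cint (R : realType) (mu : {finite_measure set R -> \bar R}) (g : R -> R) : R :=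
  Rintegral mu setT g.

Definition meq (R : realType) (mu nu : {finite_measure set R -> \bar R}) : Prop :=
  forall A : set R, measurable A -> mu A = nu A.

Definition wconv (R : realType) (mu_ : nat -> {finite_measure set R -> \bar R})
    (mu : {finite_measure set R -> \bar R}) : Prop :=
  forall f : R -> R, continuous f -> periodic2pi f ->
    (fun k => cint (mu_ k) f) @ \oo --> cint mu f.

Definition delta (R : realType) (K : Type) (g : K -> R -> R)
    (mu0 mu1 : {finite_measure set R -> \bar R}) : \bar R :=
  ereal_sup [set (`| cint mu0 (g xi) - cint mu1 (g xi) |)%:E | xi in [set: K]].

Definition is_metric_on (R : realType)
    (d : {finite_measure set R -> \bar R} -> {finite_measure set R -> \bar R} -> \bar R) : Prop :=
  (forall mu nu, on_circle mu -> on_circle nu -> d mu nu \is a fin_num) /\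
  (forall mu nu, on_circle mu -> on_circle nu -> (d mu nu = 0%E <-> meq mu nu)) /\
  (forall mu nu, on_circle mu -> on_circle nu -> d mu nu = d nu mu) /\
  (forall mu nu rho, on_circle mu -> on_circle nu -> on_circle rho ->
     (d mu rho <= d mu nu + d nu rho)%E).

Definition weakly_continuous (R : realType)
    (d : {finite_measure set R -> \bar R} -> {finite_measure set R -> \bar R} -> \bar R) : Prop :=
  forall (mu_ nu_ : nat -> {finite_measure set R -> \bar R}) mu nu,
    (forall k, on_circle (mu_ k)) -> (forall k, on_circle (nu_ k)) ->
    on_circle mu -> on_circle nu ->
    wconv mu_ mu -> wconv nu_ nu ->
    (fun k => d (mu_ k) (nu_ k)) @ \oo --> d mu nu.

(* equicontinuity of the family, as in the paper (for periodic functions,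
   distance on R is equivalent to the circle distance) *)
Definition equicontinuous_family (R : realType) (K : Type) (g : K -> R -> R) : Prop :=
  forall eps : R, 0 < eps -> exists2 gam : R, 0 < gam &
    forall (xi : K) (t1 t2 : R), `|t1 - t2| < gam -> `|g xi t1 - g xi t2| < eps.

Definition unif_bounded (R : realType) (K : Type) (g : K -> R -> R) : Prop :=
  exists M : R, forall (xi : K) (t : R), `|g xi t| <= M.

From HB Require Import structures.
From mathcomp Require Import all_boot all_order all_algebra.
From mathcomp Require Import all_classical all_reals all_analysis.
From mathcomp Require Import measurable_realfun.
From mathcomp Require Import lra ring.
Import Order.TTheory GRing.Theory Num.Theory.
Import numFieldNormedType.Exports.
Local Open Scope classical_set_scope.
Local Open Scope ring_scope.
Set Implicit Arguments. Unset Strict Implicit. Unset Printing Implicit Defensive.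

(* Necessity: Dirac masses at convergent points converge weakly, while
   [delta (\d_t) 0 >= `|g xi t|] and [delta (\d_t) (\d_u) >= `|g xi t - g xi u|].
   An unbounded or non-equicontinuous family, sampled along a convergent
   subsequence of bad points, therefore contradicts the weak continuity of delta.
   Sufficiency: a continuous partition of unity subordinate to a fine mesh of
   the circle approximates every [g xi] uniformly in [xi] (by equicontinuity),
   so the weak convergence of its finitely many integrals controls
   [sup_xi `|int g xi d(mu_k - mu)|]; this gives weak continuity, boundedness
   gives finiteness and condition (a) gives definiteness. *)

Lemma increasing_seq_geq (f : nat -> nat) n : increasing_seq f -> (n <= f n)%N.
Proof.
move=> /increasing_seqP f_incr; elim: n => [|n IHn] //.
exact: leq_ltn_trans IHn (f_incr n).
Qed.

Lemma cvg_subseq (T : topologicalType) (u : nat -> T) (f : nat -> nat) (l : T) :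
  increasing_seq f -> u @ \oo --> l -> (u \o f) @ \oo --> l.
Proof.
move=> f_incr u_cvg; apply: cvg_comp u_cvg => A [N _ NA].
by exists N => // n /= Nn; exact/NA/(leq_trans Nn)/increasing_seq_geq.
Qed.

Section circle.
Variable R : realType.
Implicit Types (f : R -> R) (t x : R).

Lemma pi2_gt0 : 0 < 2 * pi :> R.
Proof. by rewrite mulr_gt0 // pi_gt0. Qed.

Lemma periodic2pi_natD f (n : nat) x : periodic2pi f ->
  f (x + n%:R * (2 * pi)) = f x.
Proof.
move=> fper; elim: n x => [|n IHn] x; first by rewrite mul0r addr0.
by rewrite -addn1 natrD mulrDl mul1r addrA fper IHn.
Qed.

Lemma periodic2pi_intD f (z : int) x : periodic2pi f ->
  f (x + z%:~R * (2 * pi)) = f x.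
Proof.
move=> fper; case: z => n; first exact: periodic2pi_natD.
rewrite NegzE mulrNz mulNr -[in RHS](subrK (n.+1%:R * (2 * pi)) x).
by rewrite periodic2pi_natD.
Qed.

Definition circle_rep t : R := t - (Num.floor (t / (2 * pi)))%:~R * (2 * pi).

Lemma circle_rep_itv t : 0 <= circle_rep t < 2 * pi.
Proof.
have pi2 := pi2_gt0; have /andP[fl_le lt_fl] := floor_itv (t / (2 * pi)).
rewrite /circle_rep subr_ge0 ltrBlDr -ler_pdivlMr // fl_le /=.
rewrite -[X in X < _](divfK (lt0r_neq0 pi2)) -[X in _ < X + _]mul1r -mulrDl.
by rewrite ltr_pM2r // addrC -intrD1.
Qed.

Lemma periodic2pi_circle_repD f t x : periodic2pi f ->
  f (circle_rep t + x) = f (t + x).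
Proof. by move=> fper; rewrite /circle_rep addrAC -mulNr -intrN periodic2pi_intD. Qed.

Lemma periodic2pi_circle_rep f t : periodic2pi f -> f (circle_rep t) = f t.
Proof. by move=> fper; rewrite -[circle_rep t]addr0 periodic2pi_circle_repD ?addr0. Qed.

Lemma circle_rep_subseq (u : nat -> R) :
  exists2 f : nat -> nat, increasing_seq f & cvgn (circle_rep \o u \o f).
Proof.
apply: bolzano_weierstrass; exists (2 * pi); split; first exact: num_real.
move=> M M_gt n _ /=; have /andP[rep_ge0 rep_lt] := circle_rep_itv (u n).
by rewrite ger0_norm // ltW // (lt_trans rep_lt).
Qed.

End circle.

Section circle_integral.
Variable R : realType.
Notation measure := {finite_measure set R -> \bar R}.
Implicit Types (mu nu : measure) (f h : R -> R).

Lemma bounded_integrable mu f (M : R) : measurable_fun setT f ->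
  (forall x, `|f x| <= M) -> mu.-integrable setT (EFin \o f).
Proof.
move=> mf fM; apply: (@le_integrable _ _ _ mu _ measurableT _ (EFin \o cst M)).
- exact/measurable_EFinP.
- by move=> x _ /=; rewrite lee_fin (le_trans (fM x) (ler_norm M)).
- exact: finite_measure_integrable_cst.
Qed.

Lemma cint_dirac (a : R) f : measurable_fun setT f -> cint (\d_a) f = f a.
Proof.
move=> mf; rewrite /cint /Rintegral integral_dirac //=; last exact: measurableT_comp.
by rewrite indicE mem_set // mul1r.
Qed.

Lemma cint_mzero f : cint (@mzero _ R R) f = 0.
Proof. by rewrite /cint /Rintegral integral_measure_zero. Qed.

Lemma cint_cst1 mu : cint mu (fun=> 1) = fine (mu setT).
Proof. by rewrite /cint Rintegral_cst // mul1r. Qed.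

Lemma cint_meq mu nu f : meq mu nu -> cint mu f = cint nu f.
Proof.
move=> mu_nu; rewrite /cint /Rintegral; congr fine.
by apply: (eq_measure_integral nu) => A mA _; exact: mu_nu.
Qed.

Lemma cintB mu f h (Mf Mh : R) :
  measurable_fun setT f -> measurable_fun setT h ->
  (forall x, `|f x| <= Mf) -> (forall x, `|h x| <= Mh) ->
  cint mu (fun t => f t - h t) = cint mu f - cint mu h.
Proof.
by move=> mf mh fM hM; rewrite /cint RintegralB //; exact: bounded_integrable.
Qed.

Lemma cintZ mu (c : R) f (M : R) : measurable_fun setT f ->
  (forall x, `|f x| <= M) -> cint mu (fun t => c * f t) = c * cint mu f.
Proof. by move=> mf fM; rewrite /cint RintegralZl //; exact: bounded_integrable. Qed.

Lemma cint_sum mu n (F : 'I_n -> R -> R) (M : 'I_n -> R) :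
  (forall j, measurable_fun setT (F j)) -> (forall j x, `|F j x| <= M j) ->
  cint mu (fun t => \sum_(j < n) F j t) = \sum_(j < n) cint mu (F j).
Proof.
move=> mF FM; rewrite /cint /Rintegral.
under eq_integral do rewrite -sumEFin.
rewrite integral_sum //; last by move=> j; exact: bounded_integrable (mF j) (FM j).
rewrite -sum_fine // => j _.
exact: integrable_fin_num (bounded_integrable _ (mF j) (FM j)).
Qed.

Lemma on_circle_dirac t : on_circle (\d_(circle_rep t) : measure).
Proof.
rewrite /on_circle /= diracE memNset //= => -[].
by rewrite in_itv /= circle_rep_itv.
Qed.

Lemma on_circle_mzero : on_circle (@mzero _ R R : measure).
Proof. by []. Qed.

Lemma cint_dirac_circle_rep f t : continuous f -> periodic2pi f ->
  cint (\d_(circle_rep t) : measure) f = f t.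
Proof.
move=> fcont fper.
by rewrite cint_dirac ?periodic2pi_circle_rep //; exact: continuous_measurable_fun.
Qed.

Lemma wconv_cst mu : wconv (fun=> mu) mu.
Proof. by move=> f _ _; exact: cvg_cst. Qed.

Lemma wconv_dirac (s : nat -> R) (l : R) : s @ \oo --> l ->
  wconv (fun n => \d_(circle_rep (s n)) : measure) (\d_(circle_rep l)).
Proof.
move=> s_cvg f fcont fper; rewrite cint_dirac_circle_rep //.
have -> : (fun n => cint \d_(circle_rep (s n)) f) = f \o s.
  by apply: funext => n; rewrite /= cint_dirac_circle_rep.
by apply: continuous_cvg => //; exact: fcont.
Qed.

Lemma wconv_mass (mu_ : nat -> measure) mu :
  wconv mu_ mu -> (fun k => fine (mu_ k setT)) @ \oo --> fine (mu setT).
Proof.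
move=> mu_cvg; rewrite -cint_cst1.
have -> : (fun k => fine (mu_ k setT)) = (fun k => cint (mu_ k) (fun=> 1)).
  by apply: funext => k; rewrite cint_cst1.
exact: mu_cvg (@cst_continuous R R 1) (fun=> erefl).
Qed.

Lemma cint_on_circle_le mu f (M e : R) : on_circle mu ->
  measurable_fun setT f -> (forall x, `|f x| <= M) ->
  (forall x, 0 <= x < 2 * pi -> `|f x| <= e) ->
  `|cint mu f| <= e * fine (mu setT).
Proof.
move=> mu_circ mf fM fe.
have mI : measurable (`[0, 2 * pi[%classic : set R) by exact: measurable_itv.
have e_ge0 : 0 <= e by rewrite (le_trans _ (fe 0 _)) // lexx pi2_gt0.
have fint := bounded_integrable mu mf fM.
have fIint : mu.-integrable `[0, 2 * pi[ (EFin \o f) by exact: integrableS fint.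
have -> : cint mu f = Rintegral mu `[0, 2 * pi[ f.
  rewrite /cint /Rintegral (negligible_integral _ _ fint mu_circ) //.
    by rewrite setTD setCK.
  exact: measurableC.
apply: le_trans (le_normr_Rintegral mI fIint) _.
apply: (@le_trans _ _ (Rintegral mu `[0, 2 * pi[ (fun=> e))).
  apply: le_Rintegral => //; last exact: finite_measure_integrable_cst.
  apply: (le_integrable mI _ _ fIint) => [|x _] /=; last by rewrite normr_id.
  apply/measurable_EFinP/measurableT_comp => //; exact: measurable_funS mf.
rewrite Rintegral_cst // ler_wpM2l // fine_le ?fin_num_measure //.
by rewrite le_measure ?inE.
Qed.

End circle_integral.

Definition separates_measures (R : realType) (K : Type) (g : K -> R -> R) :=
  forall mu0 mu1 : {finite_measure set R -> \bar R},
    on_circle mu0 -> on_circle mu1 -> ~ meq mu0 mu1 ->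
    exists xi : K, cint mu0 (g xi) <> cint mu1 (g xi).

Section delta.
Variables (R : realType) (K : Type) (g : K -> R -> R).
Notation measure := {finite_measure set R -> \bar R}.
Implicit Types (mu nu : measure).

Lemma delta_ge mu nu xi :
  (`|cint mu (g xi) - cint nu (g xi)|%:E <= delta g mu nu)%E.
Proof. by apply: ereal_sup_ubound; exists xi. Qed.

Lemma delta_le mu nu (B : R) :
  (forall xi, `|cint mu (g xi) - cint nu (g xi)| <= B) ->
  (delta g mu nu <= B%:E)%E.
Proof. by move=> le_B; apply: ge_ereal_sup => _ [xi _ <-]; rewrite lee_fin. Qed.

Lemma delta_ge0 mu nu (xi : K) : (0 <= delta g mu nu)%E.
Proof. by apply: le_trans (delta_ge _ _ xi); rewrite lee_fin. Qed.

Lemma fine_delta_ge mu nu xi : delta g mu nu \is a fin_num ->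
  `|cint mu (g xi) - cint nu (g xi)| <= fine (delta g mu nu).
Proof. by move=> dfin; rewrite -lee_fin fineK //; exact: delta_ge. Qed.

Lemma eq_delta mu nu mu' nu' :
  (forall xi, cint mu (g xi) = cint mu' (g xi)) ->
  (forall xi, cint nu (g xi) = cint nu' (g xi)) ->
  delta g mu nu = delta g mu' nu'.
Proof.
by move=> eq_mu eq_nu; rewrite /delta; under eq_fun do rewrite eq_mu eq_nu.
Qed.

Lemma delta_le_shift mu nu mu' nu' (a : R) :
  (forall xi, `|cint mu' (g xi) - cint mu (g xi)| +
              `|cint nu' (g xi) - cint nu (g xi)| <= a) ->
  (delta g mu' nu' <= delta g mu nu + a%:E)%E.
Proof.
move=> close; apply: ge_ereal_sup => _ [xi _ <-].
apply: (@le_trans _ _ (`|cint mu (g xi) - cint nu (g xi)| + a)%:E).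
  rewrite lee_fin; have := close xi; set x := cint mu _; set y := cint nu _.
  set x' := cint mu' _; set y' := cint nu' _ => xy_a.
  have -> : x' - y' = (x - y) + ((x' - x) - (y' - y)) by ring.
  apply: le_trans (ler_normD _ _) _; rewrite lerD2l.
  exact: le_trans (ler_normB _ _) xy_a.
by rewrite EFinD leeD2r // delta_ge.
Qed.

End delta.

Section necessity.
Variables (R : realType) (K : Type) (g : K -> R -> R).
Notation measure := {finite_measure set R -> \bar R}.
Hypothesis gcont : forall xi, continuous (g xi).
Hypothesis gper : forall xi, periodic2pi (g xi).
Hypothesis dmetric : is_metric_on (delta g).

Lemma metric_separates : separates_measures g.
Proof.
have [_ [delta0 _]] := dmetric.
move=> mu0 mu1 mu0_circ mu1_circ neq01; apply: contrapT => nosep; apply: neq01.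
apply/(delta0 _ _ mu0_circ mu1_circ).
rewrite -[RHS](delta0 _ _ mu0_circ mu0_circ).2; last by move=> A.
apply: eq_delta => // xi; apply: contrapT => neq; apply: nosep.
by exists xi => eq01; apply: neq.
Qed.

Hypothesis dcont : weakly_continuous (delta g).

Lemma fine_delta_cvg (mu_ nu_ : nat -> measure) (mu nu : measure) :
  (forall k, on_circle (mu_ k)) -> (forall k, on_circle (nu_ k)) ->
  on_circle mu -> on_circle nu -> wconv mu_ mu -> wconv nu_ nu ->
  (fun k => fine (delta g (mu_ k) (nu_ k))) @ \oo --> fine (delta g mu nu).
Proof.
move=> mu_circ nu_circ mu_circ' nu_circ' mu_cvg nu_cvg.
have := dcont mu_circ nu_circ mu_circ' nu_circ' mu_cvg nu_cvg.
by rewrite -(fineK (dmetric.1 _ _ mu_circ' nu_circ')) => /fine_cvgP[].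
Qed.

Lemma metric_unif_bounded : unif_bounded g.
Proof.
apply: contrapT => unbdd.
have /choice[p gp] : forall n : nat, exists q : K * R, n%:R < `|g q.1 q.2|.
  move=> n; apply: contrapT => nq; apply: unbdd; exists n%:R => xi t.
  by rewrite leNgt; apply/negP => gt; apply: nq; exists (xi, t).
have [f f_incr /cvg_ex[l rep_cvg]] := circle_rep_subseq (fun n => (p n).2).
pose s k := circle_rep (p (f k)).2.
have dcvg := fine_delta_cvg (fun k => on_circle_dirac (s k))
  (fun=> on_circle_mzero R) (on_circle_dirac l) (on_circle_mzero R)
  (wconv_dirac rep_cvg) (@wconv_cst R mzero).
set x := fine _ in dcvg.
have [k /andP[dk_lt k_gt]] : exists k,
    (fine (delta g (\d_(circle_rep (s k))) mzero) < x + 1) && (x + 1 < k%:R).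
  apply: (@filter_ex _ \oo); near=> k; apply/andP; split; near: k.
    by apply: cvgr_lt dcvg _ _; rewrite ltrDl.
  exact: nbhs_infty_gtr.
have := fine_delta_ge (p (f k)).1 (dmetric.1 _ _ (on_circle_dirac (s k))
  (on_circle_mzero R)).
rewrite cint_mzero subr0 cint_dirac_circle_rep // /s periodic2pi_circle_rep //.
apply/negP; rewrite -ltNge; apply: lt_trans dk_lt _; apply: lt_trans k_gt _.
by apply: le_lt_trans (gp (f k)); rewrite ler_nat increasing_seq_geq.
Unshelve. all: by end_near.
Qed.

Lemma metric_equicontinuous : equicontinuous_family g.
Proof.
move=> e e_gt0; apply: contrapT => not_equi.
have /choice[p p_bad] : forall n : nat, exists q : K * R * R,
    `|q.1.2 - q.2| < n.+1%:R^-1 /\ e <= `|g q.1.1 q.1.2 - g q.1.1 q.2|.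
  move=> n; apply: contrapT => nq; apply: not_equi; exists n.+1%:R^-1 => //.
  move=> xi t1 t2 t12; rewrite ltNge; apply/negP => ge_e.
  by apply: nq; exists (xi, t1, t2).
have [f f_incr /cvg_ex[l rep_cvg]] := circle_rep_subseq (fun n => (p n).1.2).
pose d n := (p n).2 - (p n).1.2.
have d_cvg : d @ \oo --> 0.
  apply/cvgrPdist_lt => r r_gt0; near=> n; rewrite sub0r normrN distrC.
  apply: lt_trans (proj1 (p_bad n)) _; near: n.
  exact: (near_infty_natSinv_lt (PosNum r_gt0)).
pose s k := circle_rep (p (f k)).1.2.
pose t k := s k + d (f k).
have t_cvg : t @ \oo --> l.
  by rewrite -[l]addr0; apply: cvgD rep_cvg _; exact: cvg_subseq d_cvg.
have dcvg := fine_delta_cvg (fun k => on_circle_dirac (s k))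
  (fun k => on_circle_dirac (t k)) (on_circle_dirac l) (on_circle_dirac l)
  (wconv_dirac rep_cvg) (wconv_dirac t_cvg).
rewrite (dmetric.2.1 _ _ (on_circle_dirac l) (on_circle_dirac l)).2 //= in dcvg.
have [k dk_lt] : exists k, fine (delta g (\d_(circle_rep (s k)))
    (\d_(circle_rep (t k)))) < e.
  by apply: (@filter_ex _ \oo); apply: cvgr_lt dcvg _ _.
have := fine_delta_ge (p (f k)).1.1 (dmetric.1 _ _ (on_circle_dirac (s k))
  (on_circle_dirac (t k))).
rewrite !cint_dirac_circle_rep // /t /s periodic2pi_circle_rep //.
rewrite periodic2pi_circle_repD // /d subrKC.
by apply/negP; rewrite -ltNge; apply: lt_le_trans dk_lt (proj2 (p_bad (f k))).
Unshelve. all: by end_near.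
Qed.

End necessity.

Section cosine.
Variable R : realType.
Implicit Types (t u x y h : R).

Lemma periodic2pi_cos : periodic2pi (@cos R).
Proof. by move=> x; rewrite mulr_natl cosD2pi. Qed.

Lemma ler_cos : {in `[0, pi] &, {mono @cos R : y x / x <= y >-> y <= x}}.
Proof.
have cos_nhomo : {in `[0, pi] &, {homo @cos R : x y / y < x >-> x < y}}.
  by move=> x y xI yI; rewrite ltr_cos.
exact: le_nmono_in cos_nhomo.
Qed.

Lemma cos_lt_norm_lt y h : `|y| <= pi -> 0 <= h <= pi -> cos h < cos y -> `|y| < h.
Proof.
move=> y_le /andP[h_ge0 h_le] cos_lt; rewrite ltNge; apply/negP => h_le_y.
suff : cos `|y| <= cos h by rewrite cos_norm leNgt cos_lt.
by rewrite ler_cos // in_itv /= ?h_ge0 ?h_le ?normr_ge0.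
Qed.

Lemma cos_lt_circle_dist t u h : 0 <= t < 2 * pi -> 0 <= u < 2 * pi ->
  0 <= h <= pi -> cos h < cos (t - u) ->
  exists z : int, `|t + z%:~R * (2 * pi) - u| < h.
Proof.
move=> /andP[t_ge0 t_lt] /andP[u_ge0 u_lt] h_itv cos_lt; have pi_gt0 := pi_gt0 R.
have [tu_le|tu_gt] := leP (t - u) pi; last first.
  exists (-1); rewrite mulN1r; apply: cos_lt_norm_lt => //.
    by rewrite ler_norml; apply/andP; split; lra.
  by rewrite addrAC -[in X in _ < X]periodic2pi_cos subrK.
have [tu_ge|tu_lt] := leP (- pi) (t - u).
  by exists 0; rewrite mul0r addr0 cos_lt_norm_lt // ler_norml tu_ge tu_le.
exists 1; rewrite mul1r addrAC; apply: cos_lt_norm_lt => //.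
  by rewrite ler_norml; apply/andP; split; lra.
by rewrite periodic2pi_cos.
Qed.

End cosine.

Lemma circle_mesh (R : realType) (r : R) : 0 < r ->
  exists (N : nat) (s : R), [/\ 0 < s, 2 * s < r & N%:R * s = 2 * pi].
Proof.
move=> r_gt0; have pi_gt0 := pi_gt0 R.
have q_ge0 : 0 <= 4 * pi / r by rewrite divr_ge0 ?mulr_ge0 // ltW.
have /andP[_ N_gt] := truncn_itv q_ge0.
set N := (Num.truncn _).+1 in N_gt; have N_gt0 : 0 < N%:R :> R by rewrite ltr0n.
move: N_gt; rewrite ltr_pdivrMr // => N_gt.
exists N, (2 * pi / N%:R); split.
- by rewrite divr_gt0 // mulr_gt0.
- by rewrite mulrA ltr_pdivrMr //; move: N_gt; rewrite mulrC; lra.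
- by rewrite mulrC divfK // gt_eqF.
Qed.

Section partition_of_unity.
Variable R : realType.
Implicit Types (s t : R) (j : nat).

Definition bump s j t : R := Num.max 0 (cos (t - j%:R * s) - cos (2 * s)).

(* The second argument of the max is inactive on [[0, 2pi)] (see
   [bump_sum_eq]); it only keeps the denominator of [pou] positive on R. *)
Definition bump_sum (N : nat) s t : R :=
  Num.max (\sum_(j < N) bump s j t) (cos s - cos (2 * s)).

Definition pou (N : nat) s j t : R := bump s j t / bump_sum N s t.

Definition pou_interp (N : nat) s (G : R -> R) t : R :=
  \sum_(j < N) G (j%:R * s) * pou N s j t.

Lemma bump_ge0 s j t : 0 <= bump s j t.
Proof. by rewrite /bump le_max lexx. Qed.

Lemma bump_cont s j : continuous (bump s j).
Proof.
move=> t; rewrite (_ : bump s j =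
  cst 0 \max (fun t => cos (t - j%:R * s) - cos (2 * s))) //.
apply: continuous_max; first exact: cst_continuous.
apply: continuousB; last exact: cst_continuous.
apply: continuous_comp; last exact: continuous_cos.
by apply: continuousB; [exact: cvg_id | exact: cst_continuous].
Qed.

Lemma bump_sum_cont N s : continuous (bump_sum N s).
Proof.
have sum_cont : continuous (fun t => \sum_(j < N) bump s j t).
  elim: N => [|N IHN] t.
    rewrite (_ : (fun t => _) = cst 0); first exact: cst_continuous.
    by apply: funext => ?; rewrite big_ord0.
  rewrite (_ : (fun t => _) = (fun t => \sum_(j < N) bump s j t) + bump s N).
    by apply: continuousD; [exact: IHN | exact: bump_cont].
  by apply: funext => ?; rewrite big_ord_recr.
move=> t; rewrite (_ : bump_sum N s = (fun t => \sum_(j < N) bump s j t) \max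
  cst (cos s - cos (2 * s))) //.
by apply: continuous_max; [exact: sum_cont | exact: cst_continuous].
Qed.

Lemma periodic2pi_bump s j : periodic2pi (bump s j).
Proof. by move=> t; rewrite /bump addrAC periodic2pi_cos. Qed.

Lemma periodic2pi_pou N s j : periodic2pi (pou N s j).
Proof.
move=> t; rewrite /pou /bump_sum periodic2pi_bump.
by under eq_bigr do rewrite periodic2pi_bump.
Qed.

Variables (N : nat) (s : R).
Hypotheses (s_gt0 : 0 < s) (s_le : 2 * s <= pi) (Ns : N%:R * s = 2 * pi).

Lemma bump_floor_gt0 : 0 < cos s - cos (2 * s).
Proof.
have s_in : s \in `[0, pi].
  by rewrite in_itv /= ltW //=; move: s_gt0 s_le; lra.
have s2_in : 2 * s \in `[0, pi] by rewrite in_itv /= s_le mulr_ge0 ?ltW.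
by rewrite subr_gt0 ltr_cos //; move: s_gt0; lra.
Qed.

Lemma bump_sum_gt0 t : 0 < bump_sum N s t.
Proof. by rewrite /bump_sum lt_max bump_floor_gt0 orbT. Qed.

Lemma bump_le_sum (j : 'I_N) t : bump s j t <= \sum_(i < N) bump s i t.
Proof.
by rewrite (bigD1 j) //= lerDl sumr_ge0 // => i _; exact: bump_ge0.
Qed.

Lemma pou_ge0 j t : 0 <= pou N s j t.
Proof. by rewrite divr_ge0 ?bump_ge0 // ltW ?bump_sum_gt0. Qed.

Lemma pou_le1 (j : 'I_N) t : pou N s j t <= 1.
Proof.
rewrite ler_pdivrMr ?bump_sum_gt0 // mul1r.
by rewrite /bump_sum le_max bump_le_sum.
Qed.

Lemma pou_cont j : continuous (pou N s j).
Proof.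
move=> t; apply: continuousM; first exact: bump_cont.
apply: continuousV; first by rewrite gt_eqF ?bump_sum_gt0.
exact: bump_sum_cont.
Qed.

Lemma bump_cover t : 0 <= t < 2 * pi ->
  exists j : 'I_N, cos s - cos (2 * s) <= bump s j t.
Proof.
move=> /andP[t_ge0 t_lt]; have pi_gt0 := pi_gt0 R.
have /andP[j_le j_gt] := truncn_itv (divr_ge0 t_ge0 (ltW s_gt0)).
set j := Num.truncn (t / s) in j_le j_gt *.
have jN : (j < N)%N.
  by rewrite -(ltr_nat R) (le_lt_trans j_le) // ltr_pdivrMr // Ns.
exists (Ordinal jN); rewrite /bump le_max lerD2r /=; apply/orP; right.
move: j_le j_gt; rewrite ler_pdivlMr // ltr_pdivrMr // -addn1 natrD mulrDl mul1r.
move=> j_le j_gt; move: s_gt0 s_le => s_gt0' s_le'.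
by rewrite ler_cos ?in_itv /=; [lra | apply/andP; split; lra..].
Qed.

Lemma bump_sum_eq t : 0 <= t < 2 * pi ->
  bump_sum N s t = \sum_(j < N) bump s j t.
Proof.
move=> /bump_cover[j floor_le]; apply/max_idPl.
exact: le_trans floor_le (bump_le_sum j t).
Qed.

Lemma sum_pou t : 0 <= t < 2 * pi -> \sum_(j < N) pou N s j t = 1.
Proof.
by move=> t_itv; rewrite -mulr_suml -bump_sum_eq // divff // gt_eqF ?bump_sum_gt0.
Qed.

Lemma bump_gt0_near (j : 'I_N) t : 0 <= t < 2 * pi -> 0 < bump s j t ->
  exists z : int, `|t + z%:~R * (2 * pi) - j%:R * s| < 2 * s.
Proof.
move=> t_itv; rewrite /bump lt_max ltxx /= subr_gt0.
apply: cos_lt_circle_dist => //.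
  by rewrite mulr_ge0 ?ler0n ?ltW //= -Ns ltr_pM2r // ltr_nat.
by rewrite s_le mulr_ge0 // ltW.
Qed.

Lemma pou_interp_approx (G : R -> R) (e : R) t : periodic2pi G ->
  (forall t1 t2, `|t1 - t2| < 2 * s -> `|G t1 - G t2| <= e) ->
  0 <= t < 2 * pi -> `|G t - pou_interp N s G t| <= e.
Proof.
move=> Gper Gmod t_itv.
have -> : G t - pou_interp N s G t = \sum_(j < N) (G t - G (j%:R * s)) * pou N s j t.
  rewrite /pou_interp -[G t in LHS]mulr1 -(sum_pou t_itv) mulr_sumr -sumrB.
  by apply: eq_bigr => j _; rewrite mulrBl.
rewrite -[e]mulr1 -[in X in _ <= X](sum_pou t_itv) mulr_sumr.
apply: le_trans (ler_norm_sum _ _ _) (ler_sum _ _) => j _.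
rewrite normrM (ger0_norm (pou_ge0 _ _)).
have [bump_le0|/(bump_gt0_near t_itv)[z near_j]] := leP (bump s j t) 0.
  have bump0 : bump s j t = 0 by apply/le_anti; rewrite bump_le0 bump_ge0.
  by rewrite /pou bump0 !(mul0r, mulr0).
by rewrite ler_wpM2r ?pou_ge0 // -(periodic2pi_intD z t Gper); exact: Gmod near_j.
Qed.

End partition_of_unity.

Section family_estimate.
Variables (R : realType) (K : Type) (g : K -> R -> R).
Notation measure := {finite_measure set R -> \bar R}.
Hypothesis gcont : forall xi, continuous (g xi).
Hypothesis gper : forall xi, periodic2pi (g xi).
Variable M : R.
Hypothesis gM : forall xi t, `|g xi t| <= M.
Variables (N : nat) (s e : R).
Hypotheses (s_gt0 : 0 < s) (s_le : 2 * s <= pi) (Ns : N%:R * s = 2 * pi).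
Hypothesis gmod : forall xi t1 t2, `|t1 - t2| < 2 * s -> `|g xi t1 - g xi t2| <= e.

Lemma pou_measurable j : measurable_fun setT (pou N s j).
Proof. by apply: continuous_measurable_fun; apply: pou_cont. Qed.

Lemma pou_norm_le1 (j : 'I_N) t : `|pou N s j t| <= 1.
Proof. by rewrite ger0_norm ?pou_le1 // pou_ge0. Qed.

Lemma scaled_pou_measurable (c : R) j :
  measurable_fun setT (fun t => c * pou N s j t).
Proof.
apply: continuous_measurable_fun => t.
by apply: continuousM; [exact: cst_continuous | apply: pou_cont].
Qed.

Lemma scaled_pou_bound (c : R) (j : 'I_N) t : `|c * pou N s j t| <= `|c|.
Proof. by rewrite normrM ler_piMr ?pou_norm_le1. Qed.

Lemma cint_pou_interp (mu : measure) xi :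
  cint mu (pou_interp N s (g xi)) =
  \sum_(j < N) g xi (j%:R * s) * cint mu (pou N s j).
Proof.
rewrite /pou_interp (@cint_sum R mu N (fun j t => g xi (j%:R * s) * pou N s j t)
  (fun j => `|g xi (j%:R * s)|)).
- apply: eq_bigr => j _; rewrite (@cintZ R mu _ _ 1 (pou_measurable j)) //.
  exact: pou_norm_le1.
- by move=> j; exact: scaled_pou_measurable.
- by move=> j t; exact: scaled_pou_bound.
Qed.

Lemma cint_pou_interp_close (mu : measure) xi : on_circle mu ->
  `|cint mu (g xi) - \sum_(j < N) g xi (j%:R * s) * cint mu (pou N s j)|
    <= e * fine (mu setT).
Proof.
move=> mu_circ; have mg := continuous_measurable_fun (@gcont xi).
have interp_mg : measurable_fun setT (pou_interp N s (g xi)).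
  apply: (@measurable_sum _ _ _ setT _ (index_enum 'I_N)
    (fun j t => g xi (j%:R * s) * pou N s j t)) => j.
  exact: scaled_pou_measurable.
have interp_bd t : `|pou_interp N s (g xi) t| <= N%:R * M.
  have -> : N%:R * M = \sum_(j < N) M by rewrite sumr_const card_ord mulr_natl.
  apply: le_trans (ler_norm_sum _ _ _) (ler_sum _ _) => j _.
  exact: le_trans (scaled_pou_bound _ j t) (gM xi _).
rewrite -cint_pou_interp -(cintB _ mg interp_mg (gM xi) interp_bd).
apply: (cint_on_circle_le mu_circ (measurable_funB mg interp_mg)) => [t|t t_itv].
  by apply: le_trans (ler_normB _ _) (lerD (gM xi t) (interp_bd t)).
by apply: pou_interp_approx => //; exact: gmod.
Qed.

Lemma cint_family_close (mu nu : measure) (e' : R) xi :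
  on_circle mu -> on_circle nu ->
  (forall j : 'I_N, `|cint mu (pou N s j) - cint nu (pou N s j)| <= e') ->
  `|cint mu (g xi) - cint nu (g xi)|
    <= e * (fine (mu setT) + fine (nu setT)) + N%:R * (M * e').
Proof.
move=> mu_circ nu_circ pou_close.
have mu_close := cint_pou_interp_close xi mu_circ.
have nu_close := cint_pou_interp_close xi nu_circ.
set Smu := \sum_(j < N) _ in mu_close; set Snu := \sum_(j < N) _ in nu_close.
have S_close : `|Smu - Snu| <= N%:R * (M * e').
  have -> : N%:R * (M * e') = \sum_(j < N) M * e'.
    by rewrite sumr_const card_ord mulr_natl.
  rewrite -sumrB; apply: le_trans (ler_norm_sum _ _ _) (ler_sum _ _) => j _.
  by rewrite -mulrBr normrM ler_pM ?gM.
have := ler_distD Smu (cint mu (g xi)) (cint nu (g xi)).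
have := ler_distD Snu Smu (cint nu (g xi)); rewrite distrC in nu_close.
lra.
Qed.

End family_estimate.

Section sufficiency.
Variables (R : realType) (K : Type) (g : K -> R -> R).
Notation measure := {finite_measure set R -> \bar R}.
Hypothesis gcont : forall xi, continuous (g xi).
Hypothesis gper : forall xi, periodic2pi (g xi).
Hypothesis gsep : separates_measures g.
Variable M : R.
Hypothesis gM : forall xi t, `|g xi t| <= M.

Lemma separates_inhabited : inhabited K.
Proof.
have [|xi _] := gsep (on_circle_dirac 0) (on_circle_mzero R); last by exists.
move=> /(_ setT measurableT) /=; rewrite diracE mem_set //= => /eqP.
by rewrite eqe oner_eq0.
Qed.

Lemma cint_norm_le (mu : measure) xi : on_circle mu ->
  `|cint mu (g xi)| <= M * fine (mu setT).
Proof.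
move=> mu_circ; apply: cint_on_circle_le mu_circ _ (gM xi) _ => [|t _].
  exact: continuous_measurable_fun.
exact: gM.
Qed.

Lemma delta_metric : is_metric_on (delta g).
Proof.
have [xi0] := separates_inhabited.
split; [|split; [|split]].
- move=> mu nu mu_circ nu_circ; rewrite ge0_fin_numE ?(delta_ge0 _ _ _ xi0) //.
  apply: le_lt_trans (delta_le (B := M * fine (mu setT) + M * fine (nu setT)) _) _.
    move=> xi; apply: le_trans (ler_normB _ _) _.
    by rewrite lerD // cint_norm_le.
  exact: ltry.
- move=> mu nu mu_circ nu_circ; split => [delta0|mu_nu].
    apply: contrapT => /(gsep mu_circ nu_circ)[xi]; apply; apply/eqP.
    by have := delta_ge g mu nu xi; rewrite delta0 lee_fin normr_le0 subr_eq0.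
  apply/eqP; rewrite eq_le (delta_ge0 _ _ _ xi0) andbT.
  by apply: delta_le => xi; rewrite (cint_meq _ mu_nu) subrr normr0.
- by move=> mu nu _ _; rewrite /delta; under eq_fun do rewrite distrC.
- move=> mu nu rho _ _ _; apply: ge_ereal_sup => _ [xi _ <-].
  apply: (@le_trans _ _ (`|cint mu (g xi) - cint nu (g xi)| +
     `|cint nu (g xi) - cint rho (g xi)|)%:E); first by rewrite lee_fin ler_distD.
  by rewrite EFinD; apply: leeD; exact: delta_ge.
Qed.

Hypothesis gequi : equicontinuous_family g.

Lemma wconv_unif_cint (mu_ : nat -> measure) (mu : measure) :
  (forall k, on_circle (mu_ k)) -> on_circle mu -> wconv mu_ mu ->
  forall e, 0 < e -> \forall k \near \oo,
    forall xi, `|cint (mu_ k) (g xi) - cint mu (g xi)| <= e.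
Proof.
move=> mu_circ mu_circ' mu_cvg e e_gt0; have pi_gt0 := pi_gt0 R.
set m := fine (mu setT); have m_ge0 : 0 <= m by rewrite fine_ge0.
(* [cint_family_close] bounds the error by [e1 * (m_k + m) + N * M * e2],
   and eventually [m_k <= m + 1]. *)
have [e1 e1_gt0 e1_def] : exists2 e1 : R, 0 < e1 & e1 * (2 * (2 * m + 1)) = e.
  exists (e / (2 * (2 * m + 1))); last by rewrite divfK // gt_eqF //; lra.
  by rewrite divr_gt0 //; lra.
have [gam gam_gt0 gmod] := gequi e1_gt0.
have min_gt0 : 0 < Num.min gam pi by rewrite lt_min gam_gt0.
have [N [s [s_gt0 s_lt Ns]]] := circle_mesh min_gt0.
have [s_le_pi s_lt_gam] : 2 * s <= pi /\ 2 * s < gam.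
  by move: s_lt; rewrite lt_min => /andP[? ?]; split => //; exact: ltW.
have gmod' xi t1 t2 : `|t1 - t2| < 2 * s -> `|g xi t1 - g xi t2| <= e1.
  by move=> t12; apply/ltW/gmod/(lt_trans t12).
have [e2 e2_gt0 e2_def] : exists2 e2 : R, 0 < e2 & e2 * (2 * (N%:R * `|M| + 1)) = e.
  have NM_ge0 : 0 <= N%:R * `|M| by rewrite mulr_ge0.
  exists (e / (2 * (N%:R * `|M| + 1))); last by rewrite divfK // gt_eqF //; lra.
  by rewrite divr_gt0 //; lra.
have pou_cvg (j : 'I_N) :
    (fun k => cint (mu_ k) (pou N s j)) @ \oo --> cint mu (pou N s j).
  by apply: mu_cvg; [apply: pou_cont | exact: periodic2pi_pou].
near=> k => xi.
have M_ge0 : 0 <= M := le_trans (normr_ge0 _) (gM xi 0).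
have mk_le : fine (mu_ k setT) <= m + 1.
  by near: k; apply: cvgr_le (wconv_mass mu_cvg) _ _; rewrite ltrDl.
have pou_close : forall j : 'I_N,
    `|cint (mu_ k) (pou N s j) - cint mu (pou N s j)| <= e2.
  near: k; apply: filter_forall => j.
  move/cvgrPdist_le : (pou_cvg j) => /(_ e2 e2_gt0).
  by apply: filterS => k; rewrite distrC.
apply: le_trans (cint_family_close gcont gper gM s_gt0 s_le_pi Ns gmod'
  xi (mu_circ k) mu_circ' pou_close) _.
move: e2_def; rewrite ger0_norm // => e2_def.
have : e1 * fine (mu_ k setT) <= e1 * (m + 1) by rewrite ler_wpM2l // ltW.
rewrite -/m; lra.
Unshelve. all: by end_near.
Qed.

Lemma delta_weakly_continuous : weakly_continuous (delta g).
Proof.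
move=> mu_ nu_ mu nu mu_circ nu_circ mu_circ' nu_circ' mu_cvg nu_cvg.
have [delta_fin _] := delta_metric.
rewrite -(fineK (delta_fin _ _ mu_circ' nu_circ')).
apply/fine_cvgP; split; first by apply: nearW => k; exact: delta_fin.
apply/cvgrPdist_le => e e_gt0; have e2_gt0 : 0 < e / 2 by rewrite divr_gt0.
have unif_mu := wconv_unif_cint mu_circ mu_circ' mu_cvg e2_gt0.
have unif_nu := wconv_unif_cint nu_circ nu_circ' nu_cvg e2_gt0.
near=> k.
have close : forall xi, `|cint (mu_ k) (g xi) - cint mu (g xi)| +
    `|cint (nu_ k) (g xi) - cint nu (g xi)| <= e.
  move=> xi; rewrite [e]splitr; apply: lerD; move: xi; near: k.
  - exact: unif_mu.
  - exact: unif_nu.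
have close' xi : `|cint mu (g xi) - cint (mu_ k) (g xi)| +
    `|cint nu (g xi) - cint (nu_ k) (g xi)| <= e by rewrite distrC [X in _ + X]distrC.
have := delta_le_shift close; have := delta_le_shift close'.
rewrite -(fineK (delta_fin _ _ mu_circ' nu_circ')).
rewrite -(fineK (delta_fin _ _ (mu_circ k) (nu_circ k))) -!EFinD !lee_fin /=.
rewrite ler_distlC => lim_le k_le; apply/andP; split; lra.
Unshelve. all: by end_near.
Qed.

End sufficiency.

Theorem proposition4 (R : realType) (K : Type) (g : K -> R -> R)
  (gcont : forall xi, continuous (g xi)) (gper : forall xi, periodic2pi (g xi)) :
  (is_metric_on (delta g) /\ weakly_continuous (delta g)) <->
  ((forall mu0 mu1 : {finite_measure set R -> \bar R},
      on_circle mu0 -> on_circle mu1 -> ~ meq mu0 mu1 ->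
      exists xi : K, cint mu0 (g xi) <> cint mu1 (g xi)) /\
   (equicontinuous_family g /\ unif_bounded g)).
Proof.
split=> [[dmetric dcont]|[gsep [gequi [M gM]]]].
  split; first exact: metric_separates.
  by split; [exact: metric_equicontinuous | exact: metric_unif_bounded].
by split; [apply: delta_metric gM | apply: delta_weakly_continuous gM gequi].
Qed.
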